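(* Let $A$ be a ring and $I\subset A$ an ideal, and let $\widetilde A:=A/A_{I\text{-tor}}$. If $A_{I\text{-tor}}$ contains no nonzero nilpotent element of $A$, then the commutative square of canonical projections $$\begin{array}{ccc}A&\to&\widetilde A\\ \downarrow&&\downarrow\\ (A/I)_{\mathrm{red}}&\to&(\widetilde A/I\widetilde A)_{\mathrm{red}}\end{array}$$ is cartesian; that is, $A_{I\text{-tor}}\cap\sqrt I=(0)$.
   Context: Rings are commutative with $1$. For a ring $A$ and ideal $I$, $A_{I\text{-tor}}$ is the ideal of $x\in A$ such that for every $a\in I$ there is $n>0$ with $a^nx=0$. *)

From HB Require Import structures.
From mathcomp Require Import all_boot all_algebra.
Set Implicit Arguments. Unset Strict Implicit. Unset Printing Implicit Defensive.
Import GRing.Theory.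
Local Open Scope ring_scope.

Definition is_ideal (A : comPzRingType) (I : A -> Prop) : Prop :=
  I 0 /\ (forall x y, I x -> I y -> I (x + y)) /\ (forall a x, I x -> I (a * x)).

Definition Itor (A : comPzRingType) (I : A -> Prop) (x : A) : Prop :=
  forall a, I a -> exists n : nat, (0 < n)%N /\ a ^+ n * x = 0.

Definition Irad (A : comPzRingType) (I : A -> Prop) (x : A) : Prop :=
  exists n : nat, I (x ^+ n).

Definition nilpotent (A : comPzRingType) (x : A) : Prop :=
  exists n : nat, x ^+ n = 0.

From mathcomp Require Import all_boot all_algebra.
Local Open Scope ring_scope.
Import GRing.Theory.

(* If x^n lies in I, then torsion gives (x^n)^m * x = 0, i.e. x^(n m + 1) = 0. *)
Lemma Itor_Irad_nilpotent (A : comPzRingType) (I : A -> Prop) (x : A) :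
  Itor I x -> Irad I x -> nilpotent x.
Proof.
move=> torx [n In]; have [m [_ xnm_x0]] := torx _ In.
by exists (n * m).+1; rewrite exprSr exprM.
Qed.

Theorem lemma3p5 (A : comPzRingType) (I : A -> Prop) (HI : is_ideal I)
  (Hnil : forall x : A, Itor I x -> nilpotent x -> x = 0) :
  forall x : A, Itor I x -> Irad I x -> x = 0.
Proof.
by move=> x torx radx; apply: Hnil => //; apply: Itor_Irad_nilpotent radx.
Qed.
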